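(* An axiomatic extension $\vdash$ of intuitionistic linear logic $\mathsf{ILL}$ has the inconsistency lemma if and only if there exist $k\in\mathbb{Z}^+$ and a function $f\colon\mathbb{Z}^+\to\mathbb{Z}^+$ such that the theorems of $\vdash$ include the formulas $\bot^k\to x$ and $(1\land\lnot(x\land1)^m)^{f(m)}\to\lnot(1\land x)^k$ for every $m\in\mathbb{Z}^+$. In this case the inconsistency lemma is witnessed by the sets $\sim_n(x_1,\dots,x_n)=\{\lnot(1\land x_1\land\cdots\land x_n)^k\}$.
   Context: A commutative FL-algebra is $\boldsymbol{A}=\langle A;\land,\lor,\cdot,\to,0,1\rangle$ where $\langle A;\cdot,1\rangle$ is a commutative monoid, $\langle A;\land,\lor\rangle$ is a lattice, and $a\cdot b\le c\iff a\le b\to c$; $\mathsf{FL}_e$ is the variety of these. $\mathsf{ILL}$ is the logic in this language with $\Gamma\vdash_{\mathsf{ILL}}\varphi$ iff there is a finite $\Sigma\subseteq\Gamma$ with $\mathsf{FL}_e\vDash\&_{\gamma\in\Sigma}\gamma\ge1\Longrightarrow\varphi\ge1$. An axiomatic extension of $\mathsf{ILL}$ is a logic obtained from $\mathsf{ILL}$ by adding a substitution-closed set of axioms (theorems). Powers: $a^1=a$, $a^{m+1}=a^m\cdot a$. Abbreviations: $\bot=1\land(1\to0)\land(0\to1)\land(1\to(1\to1))\land((1\to1)\to1)$ and $\lnot\varphi=\varphi\to\bot$; $\lnot\psi^m$ means $\lnot(\psi^m)$. A finite set $\Gamma$ is inconsistent in $\vdash$ if $\Gamma\vdash\varphi$ for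 every formula $\varphi$. $\vdash$ has the inconsistency lemma if for every $n\ge1$ there is a finite set $\sim_n(x_1..x_n)$ of formulas such that for every finite $\Gamma\cup\{\varphi_1..\varphi_n\}$: $\Gamma\cup\{\varphi_1..\varphi_n\}$ is inconsistent iff $\Gamma\vdash\sim_n(\varphi_1..\varphi_n)$. *)

From Stdlib Require Import List Arith.
Import ListNotations.

(** Formulas in the language <and, or, ., ->, 0, 1>; variables indexed by nat
    (variable x_i of the paper is [Var (i-1)]; x is [Var 0]). *)
Inductive form : Type :=
| Var : nat -> form
| Meet : form -> form -> form
| Join : form -> form -> form
| Mul : form -> form -> form
| Imp : form -> form -> form
| Zero : form
| One : form.

Fixpoint subst (s : nat -> form) (p : form) : form :=
  match p with
  | Var i => s i
  | Meet a b => Meet (subst s a) (subst s b)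
  | Join a b => Join (subst s a) (subst s b)
  | Mul a b => Mul (subst s a) (subst s b)
  | Imp a b => Imp (subst s a) (subst s b)
  | Zero => Zero
  | One => One
  end.

Fixpoint vars_below (n : nat) (p : form) : Prop :=
  match p with
  | Var i => i < n
  | Meet a b | Join a b | Mul a b | Imp a b => vars_below n a /\ vars_below n b
  | Zero | One => True
  end.

Record FLe : Type := {
  car : Type;
  meet : car -> car -> car;
  join : car -> car -> car;
  mul : car -> car -> car;
  imp : car -> car -> car;
  zero : car;
  one : car;
  meetA : forall a b c, meet a (meet b c) = meet (meet a b) c;
  joinA : forall a b c, join a (join b c) = join (join a b) c;
  meetC : forall a b, meet a b = meet b a;
  joinC : forall a b, join a b = join b a;
  meet_join_absorb : forall a b, meet a (join a b) = a;
  join_meet_absorb : forall a b, join a (meet a b) = a;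
  mulA : forall a b c, mul a (mul b c) = mul (mul a b) c;
  mulC : forall a b, mul a b = mul b a;
  mul1 : forall a, mul a one = a;
  residuation : forall a b c, meet (mul a b) c = mul a b <-> meet a (imp b c) = a
}.

Definition le (A : FLe) (a b : car A) : Prop := meet A a b = a.

Fixpoint eval (A : FLe) (v : nat -> car A) (p : form) : car A :=
  match p with
  | Var i => v i
  | Meet a b => meet A (eval A v a) (eval A v b)
  | Join a b => join A (eval A v a) (eval A v b)
  | Mul a b => mul A (eval A v a) (eval A v b)
  | Imp a b => imp A (eval A v a) (eval A v b)
  | Zero => zero A
  | One => one A
  end.

Definition ILL_cons (Gamma : form -> Prop) (phi : form) : Prop :=
  exists Sigma : list form,
    (forall g, In g Sigma -> Gamma g) /\
    forall (A : FLe) (v : nat -> car A),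
      (forall g, In g Sigma -> le A (one A) (eval A v g)) ->
      le A (one A) (eval A v phi).

Definition subst_closed (Ax : form -> Prop) : Prop :=
  forall s p, Ax p -> Ax (subst s p).

Definition ext_cons (Ax : form -> Prop) (Gamma : form -> Prop) (phi : form) : Prop :=
  ILL_cons (fun g => Gamma g \/ Ax g) phi.

Definition theorem (Ax : form -> Prop) (phi : form) : Prop :=
  ext_cons Ax (fun _ => False) phi.

Definition of_list (l : list form) : form -> Prop := fun g => In g l.

Definition inconsistent (Ax : form -> Prop) (Gamma : list form) : Prop :=
  forall phi, ext_cons Ax (of_list Gamma) phi.

(** tilde n is the finite set ~_n(x_1,...,x_n) (x_i = Var (i-1)); given
    phis = [phi_1; ...; phi_n], ~_n(phi_1..phi_n) is obtained by substitution. *)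
Definition IL_witnessed (Ax : form -> Prop) (tilde : nat -> list form) : Prop :=
  forall n, 1 <= n ->
    forall (Gamma phis : list form), length phis = n ->
      (inconsistent Ax (Gamma ++ phis) <->
       forall psi, In psi (tilde n) ->
         ext_cons Ax (of_list Gamma) (subst (fun i => nth i phis One) psi)).

Definition has_IL (Ax : form -> Prop) : Prop :=
  exists tilde : nat -> list form,
    (forall n psi, In psi (tilde n) -> vars_below n psi) /\ IL_witnessed Ax tilde.

(** phi^(n+1) *)
Fixpoint powS (p : form) (n : nat) : form :=
  match n with
  | O => p
  | S n' => Mul (powS p n') p
  end.

(** phi^m for m >= 1 (phi^1 = phi, phi^(m+1) = phi^m . phi). *)
Definition pow (p : form) (m : nat) : form := powS p (m - 1).

Definition bot : form :=
  Meet (Meet (Meet (Meet One (Imp One Zero)) (Imp Zero One))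
             (Imp One (Imp One One)))
       (Imp (Imp One One) One).

Definition neg (p : form) : form := Imp p bot.

Definition big_meet (n : nat) : form :=
  fold_left (fun a i => Meet a (Var i)) (seq 0 n) One.

Definition sim (k n : nat) : list form := [neg (pow (big_meet n) k)].

Definition x : form := Var 0.

Definition conditions (Ax : form -> Prop) (k : nat) (f : nat -> nat) : Prop :=
  1 <= k /\ (forall m, 1 <= m -> 1 <= f m) /\
  theorem Ax (Imp (pow bot k) x) /\
  forall m, 1 <= m ->
    theorem Ax (Imp (pow (Meet One (neg (pow (Meet x One) m))) (f m))
                    (neg (pow (Meet One x) k))).

(* The engine is a local deduction theorem: if [Gamma, psi |- chi] then
   [Gamma |- (1 /\ psi)^n -> chi] for some [n].  As [|-] is defined semantically, it is
   proved by showing that the formulas [phi] with [Gamma |- (1 /\ psi)^n -> phi] for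
   some [n] contain the ILL-valid formulas and are closed under modus ponens and
   adjunction; the Lindenbaum algebra of any such set is an FL_e-algebra, and
   evaluating in it under the canonical valuation shows that the set is closed under
   ILL-consequence.

   Sufficiency: with [B = 1 /\ phi_1 /\ ... /\ phi_n], if [Gamma, phi_1..phi_n] is
   inconsistent then [Gamma, B |- bot]; the deduction theorem turns this into
   [Gamma |- not (B /\ 1)^m], hence [Gamma |- (1 /\ not (B /\ 1)^m)^(f m)], and the
   second scheme gives [not B^k].  Conversely [B] and [not B^k] give [bot^k], which
   proves everything by the first scheme.

   Necessity: applying the inconsistency lemma to [phi = 1] shows that [bot] alone is
   inconsistent ([1 <= bot] makes every variable-free formula equal to [1]); the
   deduction theorem yields [(1 /\ bot)^n0 -> x].  Likewise [~1(x), x |- bot] yields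
   [~1(x) |- (1 /\ x)^n1 -> bot].  Since [not (x /\ 1)^m, x] is inconsistent,
   [not (x /\ 1)^m] proves [~1(x)], hence [not (1 /\ x)^k] for [k = max n0 n1 + 1],
   and one more deduction step gives the exponent [f m]. *)

From Stdlib Require Import List Arith Lia.
From Stdlib Require Import PropExtensionality FunctionalExtensionality.
From Stdlib Require Import ProofIrrelevance IndefiniteDescription.
Import ListNotations.

Section FLe_theory.
Variable A : FLe.
Implicit Types a b c d : car A.

Lemma meet_idem a : meet A a a = a.
Proof. rewrite <- (join_meet_absorb A a a) at 2. apply meet_join_absorb. Qed.

Lemma join_idem a : join A a a = a.
Proof. rewrite <- (meet_idem a) at 2. apply join_meet_absorb. Qed.

Lemma le_refl a : le A a a.
Proof. apply meet_idem. Qed.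

Lemma le_trans a b c : le A a b -> le A b c -> le A a c.
Proof. unfold le; intros Hab Hbc. rewrite <- Hab, <- meetA, Hbc. reflexivity. Qed.

Lemma le_antisym a b : le A a b -> le A b a -> a = b.
Proof. unfold le; intros Hab Hba. rewrite <- Hab, meetC. exact Hba. Qed.

Lemma meet_lb_l a b : le A (meet A a b) a.
Proof. unfold le. rewrite (meetC A a b), <- meetA, meet_idem. reflexivity. Qed.

Lemma meet_lb_r a b : le A (meet A a b) b.
Proof. unfold le. rewrite <- meetA, meet_idem. reflexivity. Qed.

Lemma meet_glb a b c : le A c a -> le A c b -> le A c (meet A a b).
Proof. unfold le; intros Hca Hcb. rewrite meetA, Hca, Hcb. reflexivity. Qed.

Lemma le_iff_join a b : le A a b <-> join A a b = b.
Proof.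
  unfold le; split; intro H.
  - rewrite <- H, joinC, meetC. apply join_meet_absorb.
  - rewrite <- H. apply meet_join_absorb.
Qed.

Lemma join_ub_l a b : le A a (join A a b).
Proof. apply meet_join_absorb. Qed.

Lemma join_ub_r a b : le A b (join A a b).
Proof. rewrite joinC. apply join_ub_l. Qed.

Lemma join_lub a b c : le A a c -> le A b c -> le A (join A a b) c.
Proof. rewrite !le_iff_join; intros Hac Hbc. rewrite <- joinA, Hbc, Hac. reflexivity. Qed.

Lemma mul1l a : mul A (one A) a = a.
Proof. rewrite mulC. apply mul1. Qed.

Lemma mulACA a b c d : mul A (mul A a b) (mul A c d) = mul A (mul A a c) (mul A b d).
Proof. rewrite <- !mulA. f_equal. rewrite !mulA. f_equal. apply mulC. Qed.

Lemma le_imp a b c : le A (mul A a b) c <-> le A a (imp A b c).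
Proof. apply residuation. Qed.

Lemma imp_intro a b c : le A (mul A a b) c -> le A a (imp A b c).
Proof. apply le_imp. Qed.

Lemma imp_elim a b c : le A a (imp A b c) -> le A (mul A a b) c.
Proof. apply le_imp. Qed.

Lemma mul_imp_le a b : le A (mul A (imp A a b) a) b.
Proof. apply imp_elim, le_refl. Qed.

Lemma mul_mono_l a b c : le A a b -> le A (mul A a c) (mul A b c).
Proof. intro Hab. apply imp_elim, (le_trans _ _ _ Hab), imp_intro, le_refl. Qed.

Lemma mul_mono_r a b c : le A a b -> le A (mul A c a) (mul A c b).
Proof. intro Hab. rewrite !(mulC A c). apply mul_mono_l, Hab. Qed.

Lemma mul_mono a b c d : le A a b -> le A c d -> le A (mul A a c) (mul A b d).
Proof.
  intros Hab Hcd. apply (le_trans _ (mul A b c)); [apply mul_mono_l | apply mul_mono_r]; auto.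
Qed.

Lemma mul_le_l a b : le A b (one A) -> le A (mul A a b) a.
Proof. intro Hb. rewrite <- (mul1 A a) at 2. apply mul_mono_r, Hb. Qed.

Lemma one_le_imp a b : le A (one A) (imp A a b) <-> le A a b.
Proof. rewrite <- le_imp, mul1l. reflexivity. Qed.

Lemma one_le_mul a b : le A (one A) a -> le A (one A) b -> le A (one A) (mul A a b).
Proof. intros Ha Hb. rewrite <- (mul1 A (one A)). apply mul_mono; auto. Qed.

Lemma imp_trans_le a b c : le A (mul A (imp A a b) (imp A b c)) (imp A a c).
Proof.
  apply imp_intro. rewrite <- mulA, (mulC A _ a), mulA.
  apply (le_trans _ (mul A b (imp A b c))); [apply mul_mono_l, mul_imp_le|].
  rewrite mulC. apply mul_imp_le.
Qed.

Lemma imp_meet_le a a' b b' :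
  le A (meet A (imp A a a') (imp A b b')) (imp A (meet A a b) (meet A a' b')).
Proof.
  apply imp_intro, meet_glb.
  - apply (le_trans _ (mul A (imp A a a') a)); [apply mul_mono; apply meet_lb_l | apply mul_imp_le].
  - apply (le_trans _ (mul A (imp A b b') b)); [apply mul_mono; apply meet_lb_r | apply mul_imp_le].
Qed.

Lemma imp_join_le a a' b b' :
  le A (meet A (imp A a a') (imp A b b')) (imp A (join A a b) (join A a' b')).
Proof.
  apply imp_intro. rewrite mulC. apply imp_elim, join_lub; apply imp_intro; rewrite mulC.
  - apply (le_trans _ a'); [|apply join_ub_l].
    apply (le_trans _ (mul A (imp A a a') a)); [apply mul_mono_l, meet_lb_l | apply mul_imp_le].
  - apply (le_trans _ b'); [|apply join_ub_r].
    apply (le_trans _ (mul A (imp A b b') b)); [apply mul_mono_l, meet_lb_r | apply mul_imp_le].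
Qed.

Lemma imp_mul_le a a' b b' :
  le A (mul A (imp A a a') (imp A b b')) (imp A (mul A a b) (mul A a' b')).
Proof. apply imp_intro. rewrite mulACA. apply mul_mono; apply mul_imp_le. Qed.

Lemma imp_imp_le a a' b b' :
  le A (mul A (imp A a' a) (imp A b b')) (imp A (imp A a b) (imp A a' b')).
Proof.
  apply imp_intro, imp_intro.
  assert (E : mul A (mul A (mul A (imp A a' a) (imp A b b')) (imp A a b)) a'
              = mul A (imp A b b') (mul A (imp A a b) (mul A (imp A a' a) a'))).
  { rewrite <- !mulA, (mulC A (imp A a' a)), <- !mulA, (mulC A a' (imp A a' a)). reflexivity. }
  rewrite E. apply (le_trans _ (mul A (imp A b b') b)); [|apply mul_imp_le].
  apply mul_mono_r. apply (le_trans _ (mul A (imp A a b) a)); [|apply mul_imp_le].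
  apply mul_mono_r, mul_imp_le.
Qed.

(* [apowS a n] is [a^(n+1)], the value of [powS _ n]. *)
Fixpoint apowS a n : car A :=
  match n with O => a | S n' => mul A (apowS a n') a end.

Lemma one_le_apowS a n : le A (one A) a -> le A (one A) (apowS a n).
Proof. intro Ha. induction n; simpl; auto using one_le_mul. Qed.

Lemma apowS_antitone a n n' : le A a (one A) -> n <= n' -> le A (apowS a n') (apowS a n).
Proof.
  intros Ha Hn. induction Hn; [apply le_refl|].
  apply (le_trans _ _ _ (mul_le_l _ _ Ha) IHHn).
Qed.

Lemma apowS_add a n1 n2 : apowS a (S (n1 + n2)) = mul A (apowS a n1) (apowS a n2).
Proof.
  induction n2.
  - rewrite Nat.add_0_r. reflexivity.
  - rewrite Nat.add_succ_r. simpl in *. rewrite IHn2, mulA. reflexivity.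
Qed.

End FLe_theory.

Lemma eval_subst (A : FLe) v s p :
  eval A v (subst s p) = eval A (fun i => eval A v (s i)) p.
Proof. induction p; simpl; congruence. Qed.

Lemma eval_powS (A : FLe) v p n : eval A v (powS p n) = apowS A (eval A v p) n.
Proof. induction n; simpl; congruence. Qed.

Lemma pow_S p n : pow p (S n) = powS p n.
Proof. unfold pow. rewrite Nat.sub_succ, Nat.sub_0_r. reflexivity. Qed.

Lemma eval_pow (A : FLe) v p n : eval A v (pow p n) = apowS A (eval A v p) (n - 1).
Proof. apply eval_powS. Qed.

Lemma subst_powS s p n : subst s (powS p n) = powS (subst s p) n.
Proof. induction n; simpl; congruence. Qed.

Lemma subst_pow s p n : subst s (pow p n) = pow (subst s p) n.
Proof. apply subst_powS. Qed.

Notation valid_in A v p := (le A (one A) (eval A v p)).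

Section Consequence.
Variable Ax : form -> Prop.
Implicit Types G H : form -> Prop.

Lemma ext_cons_mono G H phi :
  (forall g, G g -> H g) -> ext_cons Ax G phi -> ext_cons Ax H phi.
Proof.
  intros HGH [S [HS HE]]. exists S. split; auto.
  intros g Hg. destruct (HS g Hg); auto.
Qed.

Lemma ext_cons_all G (L : list form) :
  (forall a, In a L -> ext_cons Ax G a) ->
  exists S, (forall g, In g S -> G g \/ Ax g) /\
    forall A v, (forall g, In g S -> valid_in A v g) -> forall a, In a L -> valid_in A v a.
Proof.
  induction L as [|a L IH]; intro HL.
  - exists []. split; [intros _ []|]. intros A v _ a [].
  - destruct IH as [S [HS HE]]; [intros; apply HL; right; auto|].
    destruct (HL a (or_introl eq_refl)) as [S1 [HS1 HE1]].
    exists (S1 ++ S). split.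
    + intros g Hg. apply in_app_or in Hg. destruct Hg; auto.
    + intros A v Hv a' [<-|Ha'].
      * apply HE1. intros; apply Hv, in_or_app; auto.
      * apply (HE A v); auto. intros; apply Hv, in_or_app; auto.
Qed.

Lemma ext_cons_rule G (L : list form) b :
  (forall a, In a L -> ext_cons Ax G a) ->
  (forall A v, (forall a, In a L -> valid_in A v a) -> valid_in A v b) ->
  ext_cons Ax G b.
Proof.
  intros HL Hb. destruct (ext_cons_all G L HL) as [S [HS HE]].
  exists S. split; auto.
Qed.

Lemma ext_cons_valid G b : (forall A v, valid_in A v b) -> ext_cons Ax G b.
Proof. intro Hb. apply (ext_cons_rule G []); [intros _ []|auto]. Qed.

Lemma ext_cons_rule1 G a b : ext_cons Ax G a ->
  (forall A v, valid_in A v a -> valid_in A v b) -> ext_cons Ax G b.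
Proof.
  intros Ha Hb. apply (ext_cons_rule G [a]).
  - intros a' [<-|[]]; auto.
  - intros A v Hv. apply Hb, Hv. left; auto.
Qed.

Lemma ext_cons_rule2 G a1 a2 b : ext_cons Ax G a1 -> ext_cons Ax G a2 ->
  (forall A v, valid_in A v a1 -> valid_in A v a2 -> valid_in A v b) -> ext_cons Ax G b.
Proof.
  intros Ha1 Ha2 Hb. apply (ext_cons_rule G [a1; a2]).
  - intros a' [<-|[<-|[]]]; auto.
  - intros A v Hv. apply Hb; apply Hv; simpl; auto.
Qed.

Lemma ext_cons_mp G a b : ext_cons Ax G a -> ext_cons Ax G (Imp a b) -> ext_cons Ax G b.
Proof.
  intros Ha Hab. apply (ext_cons_rule2 G _ _ _ Ha Hab). intros A v Ea Eab.
  apply (le_trans _ _ _ _ Ea), one_le_imp, Eab.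
Qed.

Lemma ext_cons_single G g : G g \/ Ax g -> ext_cons Ax G g.
Proof.
  intro Hg. exists [g]. split.
  - intros g' [<-|[]]. exact Hg.
  - intros A v Hv. apply Hv. left; reflexivity.
Qed.

Lemma ext_cons_assumption G g : G g -> ext_cons Ax G g.
Proof. intro Hg. apply ext_cons_single. left; exact Hg. Qed.

Lemma ext_cons_cut G H phi :
  (forall h, H h -> ext_cons Ax G h) -> ext_cons Ax H phi -> ext_cons Ax G phi.
Proof.
  intros HGH [S [HS HE]]. apply (ext_cons_rule G S); auto.
  intros a Ha. destruct (HS a Ha); auto. apply ext_cons_single; auto.
Qed.

Lemma ext_cons_theorem_subst G s p :
  subst_closed Ax -> theorem Ax p -> ext_cons Ax G (subst s p).
Proof.
  intros HAx [S [HS HE]]. exists (map (subst s) S). split.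
  - intros g Hg. apply in_map_iff in Hg. destruct Hg as [g0 [<- Hg0]].
    right. apply HAx. destruct (HS g0 Hg0) as [[]|]; auto.
  - intros A v Hv. rewrite eval_subst. apply HE.
    intros g Hg. rewrite <- eval_subst. apply Hv, in_map, Hg.
Qed.

End Consequence.

Record closed_theory := {
  th_mem :> form -> Prop;
  th_valid : forall b, (forall A v, valid_in A v b) -> th_mem b;
  th_mp : forall a b, th_mem a -> th_mem (Imp a b) -> th_mem b;
  th_adj : forall a b, th_mem a -> th_mem b -> th_mem (Meet a b)
}.

Section Lindenbaum.
Variable T : closed_theory.

Lemma th_valid_imp a b : (forall A v, le A (eval A v a) (eval A v b)) -> T (Imp a b).
Proof. intro Hab. apply th_valid. intros A v. apply one_le_imp, Hab. Qed.

Lemma th_rule1 a b : T a -> (forall A v, le A (eval A v a) (eval A v b)) -> T b.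
Proof. intros Ha Hab. apply (th_mp T a); auto using th_valid_imp. Qed.

Lemma th_rule2 a1 a2 b : T a1 -> T a2 ->
  (forall A v, le A (mul A (eval A v a1) (eval A v a2)) (eval A v b)) -> T b.
Proof.
  intros Ha1 Ha2 Hb. apply (th_mp T a2); auto. apply (th_mp T a1); auto.
  apply th_valid_imp. intros A v. apply imp_intro, Hb.
Qed.

Lemma th_rule2_meet a1 a2 b : T a1 -> T a2 ->
  (forall A v, le A (meet A (eval A v a1) (eval A v a2)) (eval A v b)) -> T b.
Proof. intros Ha1 Ha2 Hb. apply (th_rule1 (Meet a1 a2)); auto using th_adj. Qed.

Lemma th_imp_trans a b c : T (Imp a b) -> T (Imp b c) -> T (Imp a c).
Proof. intros Hab Hbc. apply (th_rule2 _ _ _ Hab Hbc). intros A v. apply imp_trans_le. Qed.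

Definition th_eqv a b := T (Imp a b) /\ T (Imp b a).

Lemma th_eqv_valid a b : (forall A v, eval A v a = eval A v b) -> th_eqv a b.
Proof. intro Hab. split; apply th_valid_imp; intros A v; rewrite Hab; apply le_refl. Qed.

Lemma th_eqv_refl a : th_eqv a a.
Proof. apply th_eqv_valid. reflexivity. Qed.

Lemma th_eqv_sym a b : th_eqv a b -> th_eqv b a.
Proof. intros [Hab Hba]; split; auto. Qed.

Lemma th_eqv_trans a b c : th_eqv a b -> th_eqv b c -> th_eqv a c.
Proof. intros [Hab Hba] [Hbc Hcb]; split; eapply th_imp_trans; eauto. Qed.

Lemma th_eqv_Meet a a' b b' : th_eqv a a' -> th_eqv b b' -> th_eqv (Meet a b) (Meet a' b').
Proof.
  intros [Ha Ha'] [Hb Hb']; split;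
    [apply (th_rule2_meet _ _ _ Ha Hb) | apply (th_rule2_meet _ _ _ Ha' Hb')];
    intros A v; apply imp_meet_le.
Qed.

Lemma th_eqv_Join a a' b b' : th_eqv a a' -> th_eqv b b' -> th_eqv (Join a b) (Join a' b').
Proof.
  intros [Ha Ha'] [Hb Hb']; split;
    [apply (th_rule2_meet _ _ _ Ha Hb) | apply (th_rule2_meet _ _ _ Ha' Hb')];
    intros A v; apply imp_join_le.
Qed.

Lemma th_eqv_Mul a a' b b' : th_eqv a a' -> th_eqv b b' -> th_eqv (Mul a b) (Mul a' b').
Proof.
  intros [Ha Ha'] [Hb Hb']; split;
    [apply (th_rule2 _ _ _ Ha Hb) | apply (th_rule2 _ _ _ Ha' Hb')]; intros A v; apply imp_mul_le.
Qed.

Lemma th_eqv_Imp a a' b b' : th_eqv a a' -> th_eqv b b' -> th_eqv (Imp a b) (Imp a' b').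
Proof.
  intros [Ha Ha'] [Hb Hb']; split;
    [apply (th_rule2 _ _ _ Ha' Hb) | apply (th_rule2 _ _ _ Ha Hb')]; intros A v; apply imp_imp_le.
Qed.

Lemma th_eqv_Meet_iff_Imp a b : th_eqv (Meet a b) a <-> T (Imp a b).
Proof.
  split.
  - intros [_ H]. apply (th_rule1 _ _ H). intros A v.
    apply imp_intro, (le_trans _ _ _ _ (mul_imp_le _ _ _)), meet_lb_r.
  - intro Hab. split; [apply th_valid_imp; intros; apply meet_lb_l|].
    apply (th_rule2_meet _ _ _ (proj1 (th_eqv_refl a)) Hab). intros A v.
    pose proof (imp_meet_le A (eval A v a) (eval A v a) (eval A v a) (eval A v b)) as H.
    rewrite meet_idem in H. exact H.
Qed.

Record quot := { qclass : form -> Prop; qclass_spec : exists a, qclass = th_eqv a }.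

Definition cls (a : form) : quot := Build_quot (th_eqv a) (ex_intro _ a eq_refl).

Definition repr (P : quot) : form :=
  proj1_sig (constructive_indefinite_description _ (qclass_spec P)).

Lemma quot_ext P Q : qclass P = qclass Q -> P = Q.
Proof.
  destruct P as [P HP], Q as [Q HQ]; simpl. intros <-.
  f_equal. apply proof_irrelevance.
Qed.

Lemma cls_repr P : cls (repr P) = P.
Proof.
  apply quot_ext. unfold repr. simpl.
  destruct (constructive_indefinite_description _ _) as [a Ha]; simpl. auto.
Qed.

Lemma cls_eq a b : cls a = cls b <-> th_eqv a b.
Proof.
  split; intro Hab.
  - apply (f_equal qclass) in Hab; simpl in Hab.
    rewrite Hab. apply th_eqv_refl.
  - apply quot_ext; simpl.
    apply functional_extensionality; intro c. apply propositional_extensionality.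
    split; intro; eauto using th_eqv_trans, th_eqv_sym.
Qed.

Lemma repr_cls a : th_eqv (repr (cls a)) a.
Proof. apply cls_eq, cls_repr. Qed.

Definition qmeet P Q := cls (Meet (repr P) (repr Q)).
Definition qjoin P Q := cls (Join (repr P) (repr Q)).
Definition qmul P Q := cls (Mul (repr P) (repr Q)).
Definition qimp P Q := cls (Imp (repr P) (repr Q)).

Lemma qmeet_cls a b : qmeet (cls a) (cls b) = cls (Meet a b).
Proof. apply cls_eq, th_eqv_Meet; apply repr_cls. Qed.

Lemma qjoin_cls a b : qjoin (cls a) (cls b) = cls (Join a b).
Proof. apply cls_eq, th_eqv_Join; apply repr_cls. Qed.

Lemma qmul_cls a b : qmul (cls a) (cls b) = cls (Mul a b).
Proof. apply cls_eq, th_eqv_Mul; apply repr_cls. Qed.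

Lemma qimp_cls a b : qimp (cls a) (cls b) = cls (Imp a b).
Proof. apply cls_eq, th_eqv_Imp; apply repr_cls. Qed.

Lemma th_Imp_Mul a b c : T (Imp (Mul a b) c) <-> T (Imp a (Imp b c)).
Proof.
  split; intro H; apply (th_rule1 _ _ H); intros A v; simpl.
  - apply imp_intro, imp_intro. rewrite <- mulA. apply mul_imp_le.
  - apply imp_intro. rewrite mulA. apply imp_elim, imp_elim, le_refl.
Qed.

Ltac quot_to_forms :=
  repeat match goal with
  | P : quot |- _ => rewrite <- (cls_repr P); generalize (repr P); clear P; intro
  end;
  repeat rewrite ?qmeet_cls, ?qjoin_cls, ?qmul_cls, ?qimp_cls.

Ltac quot_identity := quot_to_forms; apply cls_eq, th_eqv_valid; intros ? ?; simpl.

Definition lindenbaum : FLe.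
Proof.
  refine (Build_FLe quot qmeet qjoin qmul qimp (cls Zero) (cls One)
    _ _ _ _ _ _ _ _ _ _); intros.
  - quot_identity. apply meetA.
  - quot_identity. apply joinA.
  - quot_identity. apply meetC.
  - quot_identity. apply joinC.
  - quot_identity. apply meet_join_absorb.
  - quot_identity. apply join_meet_absorb.
  - quot_identity. apply mulA.
  - quot_identity. apply mulC.
  - quot_identity. apply mul1.
  - quot_to_forms. rewrite !cls_eq, !th_eqv_Meet_iff_Imp. apply th_Imp_Mul.
Defined.

Lemma lindenbaum_eval p : eval lindenbaum (fun i => cls (Var i)) p = cls p.
Proof.
  induction p; simpl; try reflexivity; rewrite IHp1, IHp2;
    [apply qmeet_cls | apply qjoin_cls | apply qmul_cls | apply qimp_cls].
Qed.

Lemma lindenbaum_one_le p : le lindenbaum (cls One) (cls p) <-> T p.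
Proof.
  unfold le; simpl. rewrite qmeet_cls, cls_eq, th_eqv_Meet_iff_Imp.
  split; intro H; apply (th_rule1 _ _ H); intros A v; simpl.
  - rewrite <- (mul1 A (imp A _ _)). apply mul_imp_le.
  - apply imp_intro. rewrite mul1. apply le_refl.
Qed.

Theorem th_closed_under_consequence (S : list form) chi :
  (forall g, In g S -> T g) ->
  (forall A v, (forall g, In g S -> valid_in A v g) -> valid_in A v chi) ->
  T chi.
Proof.
  intros HS Hchi. apply lindenbaum_one_le. rewrite <- (lindenbaum_eval chi).
  apply Hchi. intros g Hg. rewrite lindenbaum_eval. apply lindenbaum_one_le, HS, Hg.
Qed.

End Lindenbaum.

Lemma valid_in_Imp (A : FLe) v a b :
  valid_in A v (Imp a b) <-> le A (eval A v a) (eval A v b).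
Proof. apply one_le_imp. Qed.

Lemma valid_in_Imp_powS (A : FLe) v p n a :
  valid_in A v (Imp (powS p n) a) <-> le A (apowS A (eval A v p) n) (eval A v a).
Proof. simpl. rewrite eval_powS. apply one_le_imp. Qed.

Section Deduction.
Variables (Ax G : form -> Prop) (psi : form).

Definition cons_under_power (phi : form) : Prop :=
  exists n, ext_cons Ax G (Imp (powS (Meet One psi) n) phi).

Lemma cons_under_power_valid b : (forall A v, valid_in A v b) -> cons_under_power b.
Proof.
  intro Hb. exists 0. apply ext_cons_valid. intros A v. apply valid_in_Imp_powS.
  apply (le_trans _ _ _ _ (meet_lb_l _ _ _)), Hb.
Qed.

Lemma cons_under_power_mp a b :
  cons_under_power a -> cons_under_power (Imp a b) -> cons_under_power b.
Proof.
  intros [n1 Ha] [n2 Hab]. exists (S (n1 + n2)).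
  apply (ext_cons_rule2 _ _ _ _ _ Ha Hab). intros A v Ea Eab.
  apply valid_in_Imp_powS in Ea, Eab. apply valid_in_Imp_powS.
  rewrite apowS_add, mulC.
  apply (le_trans _ _ _ _ (mul_mono _ _ _ _ _ Eab Ea)), mul_imp_le.
Qed.

Lemma cons_under_power_adj a b :
  cons_under_power a -> cons_under_power b -> cons_under_power (Meet a b).
Proof.
  intros [n1 Ha] [n2 Hb]. exists (S (n1 + n2)).
  apply (ext_cons_rule2 _ _ _ _ _ Ha Hb). intros A v Ea Eb.
  apply valid_in_Imp_powS in Ea, Eb. apply valid_in_Imp_powS.
  assert (Hu : le A (eval A v (Meet One psi)) (one A)) by apply meet_lb_l.
  apply meet_glb.
  - apply (le_trans _ _ _ _ (apowS_antitone _ _ n1 (S (n1 + n2)) Hu ltac:(lia)) Ea).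
  - apply (le_trans _ _ _ _ (apowS_antitone _ _ n2 (S (n1 + n2)) Hu ltac:(lia)) Eb).
Qed.

Definition cons_under_power_theory : closed_theory :=
  Build_closed_theory cons_under_power
    cons_under_power_valid cons_under_power_mp cons_under_power_adj.

Theorem ext_cons_deduction chi :
  ext_cons Ax (fun g => G g \/ g = psi) chi -> cons_under_power chi.
Proof.
  intros [S [HS HE]].
  apply (th_closed_under_consequence cons_under_power_theory S); [|exact HE].
  intros g Hg. exists 0. destruct (HS g Hg) as [[HG | <-] | HAx].
  - apply (ext_cons_rule1 _ _ g); [apply ext_cons_assumption, HG|].
    intros A v E. apply valid_in_Imp_powS, (le_trans _ _ _ _ (meet_lb_l _ _ _)), E.
  - apply ext_cons_valid. intros A v. apply valid_in_Imp_powS, meet_lb_r.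
  - apply (ext_cons_rule1 _ _ g); [apply ext_cons_single; right; exact HAx|].
    intros A v E. apply valid_in_Imp_powS, (le_trans _ _ _ _ (meet_lb_l _ _ _)), E.
Qed.

End Deduction.

Lemma bot_le_one (A : FLe) v : le A (eval A v bot) (one A).
Proof. simpl. repeat (eapply le_trans; [apply meet_lb_l|]). apply le_refl. Qed.

(* The conjuncts of [bot] are chosen so that [1 <= bot] forces [0 = 1] and [1 -> 1 = 1]. *)
Lemma eval_closed_of_valid_bot (A : FLe) v (s : nat -> form) p :
  (forall i, s i = One) -> valid_in A v bot -> eval A v (subst s p) = one A.
Proof.
  intros Hs Hbot. simpl in Hbot.
  assert (H10 : le A (one A) (zero A)).
  { apply one_le_imp. eapply le_trans; [exact Hbot|].
    do 3 (eapply le_trans; [apply meet_lb_l|]). apply meet_lb_r. }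
  assert (H01 : le A (zero A) (one A)).
  { apply one_le_imp. eapply le_trans; [exact Hbot|].
    do 2 (eapply le_trans; [apply meet_lb_l|]). apply meet_lb_r. }
  assert (H11 : le A (imp A (one A) (one A)) (one A)).
  { apply one_le_imp. eapply le_trans; [exact Hbot|]. apply meet_lb_r. }
  assert (Ezero : zero A = one A) by (apply le_antisym; auto).
  assert (Eimp : imp A (one A) (one A) = one A).
  { apply le_antisym; auto. apply one_le_imp, le_refl. }
  induction p; simpl; try rewrite IHp1, IHp2; auto.
  - rewrite Hs. reflexivity.
  - apply meet_idem.
  - apply join_idem.
  - apply mul1.
Qed.

Lemma big_meet_S n : big_meet (S n) = Meet (big_meet n) (Var n).
Proof. unfold big_meet. rewrite seq_S, fold_left_app. reflexivity. Qed.

Section BigMeet.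
Variables (A : FLe) (w : nat -> car A).

Lemma big_meet_le_one n : le A (eval A w (big_meet n)) (one A).
Proof.
  induction n; [apply le_refl|].
  rewrite big_meet_S. apply (le_trans _ _ _ _ (meet_lb_l _ _ _) IHn).
Qed.

Lemma big_meet_le_var n i : i < n -> le A (eval A w (big_meet n)) (w i).
Proof.
  induction n; intro Hi; [lia|]. rewrite big_meet_S. simpl.
  destruct (Nat.eq_dec i n) as [->|Hin]; [apply meet_lb_r|].
  apply (le_trans _ _ _ _ (meet_lb_l _ _ _)), IHn. lia.
Qed.

Lemma one_le_big_meet n : (forall i, i < n -> le A (one A) (w i)) -> valid_in A w (big_meet n).
Proof.
  induction n; intro Hw; [apply le_refl|]. rewrite big_meet_S. simpl.
  apply meet_glb; auto.
Qed.

End BigMeet.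

Lemma vars_below_S n p : vars_below n p -> vars_below (S n) p.
Proof. induction p; simpl; intuition. Qed.

Lemma vars_below_big_meet n : vars_below n (big_meet n).
Proof.
  induction n; [exact I|]. rewrite big_meet_S. split; [apply vars_below_S, IHn | simpl; lia].
Qed.

Lemma vars_below_powS n p j : vars_below n p -> vars_below n (powS p j).
Proof. intro Hp. induction j; simpl; auto. Qed.

Lemma vars_below_sim k n psi : In psi (sim k n) -> vars_below n psi.
Proof.
  intros [<-|[]]. split; [apply vars_below_powS, vars_below_big_meet | simpl; tauto].
Qed.

Definition meet_all (phis : list form) : form :=
  subst (fun i => nth i phis One) (big_meet (length phis)).

Lemma meet_all_le_one (A : FLe) v phis : le A (eval A v (meet_all phis)) (one A).
Proof. unfold meet_all. rewrite eval_subst. apply big_meet_le_one. Qed.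

Lemma meet_all_le (A : FLe) v phis phi :
  In phi phis -> le A (eval A v (meet_all phis)) (eval A v phi).
Proof.
  intro Hphi. destruct (In_nth phis phi One Hphi) as [i [Hi <-]].
  unfold meet_all. rewrite eval_subst. apply big_meet_le_var with (w := fun i => _), Hi.
Qed.

Lemma one_le_meet_all (A : FLe) v phis :
  (forall phi, In phi phis -> valid_in A v phi) -> valid_in A v (meet_all phis).
Proof.
  intro Hphis. unfold meet_all. rewrite eval_subst.
  apply one_le_big_meet. intros i Hi. apply Hphis, nth_In, Hi.
Qed.

Lemma subst_sim k phis psi :
  In psi (sim k (length phis)) ->
  subst (fun i => nth i phis One) psi = neg (pow (meet_all phis) k).
Proof. intros [<-|[]]. unfold neg. simpl subst at 1. rewrite subst_pow. reflexivity. Qed.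

Section Sufficiency.
Variables (Ax : form -> Prop) (k : nat) (f : nat -> nat).
Hypothesis HAx : subst_closed Ax.
Hypothesis Hbot : theorem Ax (Imp (pow bot k) x).
Hypothesis Hneg : forall m, 1 <= m ->
  theorem Ax (Imp (pow (Meet One (neg (pow (Meet x One) m))) (f m)) (neg (pow (Meet One x) k))).

Lemma ext_cons_pow_bot_imp G phi : ext_cons Ax G (Imp (pow bot k) phi).
Proof.
  pose proof (ext_cons_theorem_subst Ax G (fun _ => phi) _ HAx Hbot) as H.
  cbn [subst] in H. rewrite subst_pow in H. exact H.
Qed.

Lemma ext_cons_neg_pow_imp G B m : 1 <= m ->
  ext_cons Ax G (Imp (pow (Meet One (neg (pow (Meet B One) m))) (f m)) (neg (pow (Meet One B) k))).
Proof.
  intro Hm. pose proof (ext_cons_theorem_subst Ax G (fun _ => B) _ HAx (Hneg m Hm)) as H.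
  unfold neg in *. cbn [subst] in H. rewrite !subst_pow in H. cbn [subst] in H.
  rewrite subst_pow in H. exact H.
Qed.

Lemma inconsistent_of_cons_neg Gamma phis :
  ext_cons Ax (of_list Gamma) (neg (pow (meet_all phis) k)) -> inconsistent Ax (Gamma ++ phis).
Proof.
  intros HB phi. set (Delta := of_list (Gamma ++ phis)).
  assert (HBD : ext_cons Ax Delta (meet_all phis)).
  { apply (ext_cons_rule _ _ phis).
    - intros a Ha. apply ext_cons_assumption, in_or_app. auto.
    - intros A v Hv. apply one_le_meet_all, Hv. }
  assert (HbotD : ext_cons Ax Delta (pow bot k)).
  { apply (ext_cons_rule2 _ _ _ _ _ HBD
             (ext_cons_mono _ _ _ _ (fun g Hg => in_or_app _ _ g (or_introl Hg)) HB)).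
    intros A v EB Eneg. apply valid_in_Imp in Eneg. rewrite !eval_pow in *.
    apply one_le_apowS, (le_trans _ _ _ _ (one_le_apowS _ _ (k - 1) EB) Eneg). }
  apply (ext_cons_mp _ _ _ _ HbotD), ext_cons_pow_bot_imp.
Qed.

Lemma cons_neg_of_inconsistent Gamma phis :
  inconsistent Ax (Gamma ++ phis) -> ext_cons Ax (of_list Gamma) (neg (pow (meet_all phis) k)).
Proof.
  intro Hinc.
  assert (HBbot : ext_cons Ax (fun g => of_list Gamma g \/ g = meet_all phis) bot).
  { apply (ext_cons_cut _ _ (of_list (Gamma ++ phis))); [|apply Hinc].
    intros h Hh. apply in_app_or in Hh. destruct Hh as [Hh|Hh].
    - apply ext_cons_assumption. left; exact Hh.
    - apply (ext_cons_rule1 _ _ (meet_all phis)); [apply ext_cons_assumption; right; reflexivity|].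
      intros A v E. apply (le_trans _ _ _ _ E), meet_all_le, Hh. }
  destruct (ext_cons_deduction _ _ _ _ HBbot) as [n Hn].
  assert (Hpow : ext_cons Ax (of_list Gamma)
                   (pow (Meet One (neg (pow (Meet (meet_all phis) One) (S n)))) (f (S n)))).
  { apply (ext_cons_rule1 _ _ _ _ Hn). intros A v E. apply valid_in_Imp_powS in E.
    rewrite eval_pow. apply one_le_apowS, meet_glb; [apply le_refl|].
    apply valid_in_Imp. rewrite pow_S, eval_powS. cbn [eval] in *. rewrite meetC. exact E. }
  pose proof (ext_cons_mp _ _ _ _ Hpow (ext_cons_neg_pow_imp _ _ (S n) ltac:(lia))) as HnegB.
  apply (ext_cons_rule1 _ _ _ _ HnegB).
  intros A v E. unfold neg in *. cbn [eval] in *. rewrite !eval_pow in *. cbn [eval] in *.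
  rewrite (meetC A (one A)), meet_all_le_one in E. exact E.
Qed.
End Sufficiency.

Theorem sim_IL_witnessed
    (Ax : form -> Prop) (HAx : subst_closed Ax) (k : nat) (f : nat -> nat) :
  conditions Ax k f -> IL_witnessed Ax (sim k).
Proof.
  intros (_ & _ & Hbot & Hneg) n _ Gamma phis <-.
  assert (Hsim : In (neg (pow (big_meet (length phis)) k)) (sim k (length phis)))
    by (left; reflexivity).
  split.
  - intros Hinc psi Hpsi. rewrite (subst_sim _ _ _ Hpsi).
    apply (cons_neg_of_inconsistent Ax k f HAx Hneg), Hinc.
  - intro H. apply (inconsistent_of_cons_neg Ax k HAx Hbot).
    rewrite <- (subst_sim _ _ _ Hsim). apply H, Hsim.
Qed.

Section Necessity.
Variables (Ax : form -> Prop) (tilde : nat -> list form).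
Hypothesis HIL : IL_witnessed Ax tilde.

Definition tilde1 (phi : form) : list form :=
  map (subst (fun i => nth i [phi] One)) (tilde 1).

Lemma inconsistent_snoc_iff Gamma phi :
  inconsistent Ax (Gamma ++ [phi]) <->
  forall psi, In psi (tilde1 phi) -> ext_cons Ax (of_list Gamma) psi.
Proof.
  rewrite (HIL 1 (le_n 1) Gamma [phi] eq_refl). unfold tilde1.
  split; intros H psi Hpsi.
  - apply in_map_iff in Hpsi. destruct Hpsi as [psi0 [<- Hpsi0]]. auto.
  - apply H, in_map, Hpsi.
Qed.

Lemma tilde1_inconsistent phi : inconsistent Ax (tilde1 phi ++ [phi]).
Proof. apply inconsistent_snoc_iff. intros psi Hpsi. apply ext_cons_assumption, Hpsi. Qed.

Lemma bot_inconsistent : inconsistent Ax [bot].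
Proof.
  intro phi. apply (ext_cons_cut _ _ (of_list (tilde1 One ++ [One])));
    [|apply tilde1_inconsistent].
  intros h Hh. apply in_app_or in Hh. destruct Hh as [Hh|[<-|[]]].
  - apply in_map_iff in Hh. destruct Hh as [psi [<- _]].
    apply (ext_cons_rule1 _ _ bot); [apply ext_cons_assumption; left; reflexivity|].
    intros A v E. rewrite (eval_closed_of_valid_bot A v); [apply le_refl| |exact E].
    intros [|[|i]]; reflexivity.
  - apply ext_cons_valid. intros. apply le_refl.
Qed.

Lemma inconsistent_of_cons_bot Gamma : ext_cons Ax (of_list Gamma) bot -> inconsistent Ax Gamma.
Proof.
  intros Hbot phi. apply (ext_cons_cut _ _ (of_list [bot])); [|apply bot_inconsistent].
  intros h [<-|[]]. exact Hbot.
Qed.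

Lemma theorem_of_cons_single psi chi :
  ext_cons Ax (of_list [psi]) chi -> exists n, theorem Ax (Imp (powS (Meet One psi) n) chi).
Proof.
  intro H. apply ext_cons_deduction. revert H. apply ext_cons_mono.
  intros g [<-|[]]. right; reflexivity.
Qed.

Lemma neg_pow_inconsistent_with_x m : inconsistent Ax ([neg (pow (Meet x One) m)] ++ [x]).
Proof.
  apply inconsistent_of_cons_bot.
  apply (ext_cons_rule2 _ _ (neg (pow (Meet x One) m)) x);
    [apply ext_cons_assumption; simpl; auto .. |].
  intros A v Eneg Ex. unfold neg in Eneg. apply valid_in_Imp in Eneg. rewrite eval_pow in Eneg.
  apply (le_trans _ _ _ _ (one_le_apowS _ _ _ (meet_glb _ _ _ _ Ex (le_refl _ _))) Eneg).
Qed.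

Lemma theorem_neg_pow_imp_neg m n K :
  ext_cons Ax (of_list (tilde1 x)) (Imp (powS (Meet One x) n) bot) -> n <= K ->
  exists n', theorem Ax (Imp (powS (Meet One (neg (pow (Meet x One) m))) n')
                             (neg (powS (Meet One x) K))).
Proof.
  intros Hn HnK. apply theorem_of_cons_single.
  assert (Htilde := proj1 (inconsistent_snoc_iff _ _) (neg_pow_inconsistent_with_x m)).
  apply (ext_cons_rule1 _ _ _ _ (ext_cons_cut _ _ _ _ Htilde Hn)).
  intros A v E. apply valid_in_Imp_powS in E. apply valid_in_Imp_powS.
  apply (le_trans _ _ _ _ (apowS_antitone _ _ _ _ (meet_lb_l _ _ _) HnK) E).
Qed.

Theorem conditions_of_IL_witnessed : exists k f, conditions Ax k f.
Proof.
  destruct (theorem_of_cons_single bot x (bot_inconsistent x)) as [n0 Hn0].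
  destruct (ext_cons_deduction Ax (of_list (tilde1 x)) x bot) as [n1 Hn1].
  { generalize (tilde1_inconsistent x bot). apply ext_cons_mono.
    intros g Hg. apply in_app_or in Hg. destruct Hg as [Hg|[<-|[]]]; auto. }
  destruct (functional_choice _ (fun m => theorem_neg_pow_imp_neg m n1 (Nat.max n0 n1) Hn1
                                            (Nat.le_max_r n0 n1))) as [f Hf].
  exists (S (Nat.max n0 n1)), (fun m => S (f m)).
  split; [lia|]. split; [intros; lia|]. split.
  - rewrite pow_S. apply (ext_cons_rule1 _ _ _ _ Hn0). intros A v E.
    apply valid_in_Imp_powS in E. apply valid_in_Imp_powS.
    assert (Hbot : eval A v (Meet One bot) = eval A v bot).
    { simpl eval at 1. rewrite meetC. apply bot_le_one. }
    rewrite Hbot in E.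
    apply (le_trans _ _ _ _ (apowS_antitone _ _ _ _ (bot_le_one A v) (Nat.le_max_l n0 n1)) E).
  - intros m _. rewrite !pow_S. apply Hf.
Qed.

End Necessity.

Theorem proposition10p5 (Ax : form -> Prop) (HAx : subst_closed Ax) :
  (has_IL Ax <-> exists (k : nat) (f : nat -> nat), conditions Ax k f) /\
  (forall (k : nat) (f : nat -> nat), conditions Ax k f -> IL_witnessed Ax (sim k)).
Proof.
  split; [split|].
  - intros [tilde [_ HIL]]. exact (conditions_of_IL_witnessed Ax tilde HIL).
  - intros [k [f Hcond]]. exists (sim k).
    split; [apply vars_below_sim | exact (sim_IL_witnessed Ax HAx k f Hcond)].
  - exact (sim_IL_witnessed Ax HAx).
Qed.
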